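(* Suppose $D=dH-\sum_im_iE_i$ is an effective divisor class on $X$ with $\chi(D)\ge1$, and $A_t$ is an ample divisor with $2A_t\cdot D\le A_t\cdot K$. Let $\chi_{\max}$ be the maximal value of $\chi(D')$ among effective divisor classes $D'$ satisfying $2A_t\cdot D'\le A_t\cdot K$, and put $\ell=\chi_{\max}-\chi(D)$. Then $D$ is at most $\ell$ steps away from having balanced multiplicities. In particular, if additionally $10\le n\le 17$, then $\chi(D)=\chi_{\max}=1$ and $D$ is balanced.
   Context: Let $X$ be the blowup of $\mathbb{P}^2_{\mathbb{C}}$ at $n$ very general points, with $H$ the pullback of a line class, $E_i$ the exceptional divisors, $E=\sum_iE_i$, and $K=K_X=-3H+E$. For real $t$, $A_t=tH-E$. Write $\chi(D)=\chi(\mathcal{O}_X(D))$; effective means the class of an effective divisor (zero allowed). A divisor $D=dH-\sum_im_iE_i$ has balanced multiplicities (is balanced) if $|m_i-m_j|\le1$ for all $i,j$. If $D$ is not balanced, form a sequence $D=D_0,D_1,\dots,D_k$ by repeatedly increasing one of the smallest multiplicities by $1$ and decreasing one of the largest multiplicities by $1$, stopping at the first balanced divisor $D_k$; then $D$ is said to be $k$ steps away from having balanced multiplicities ($k$ is independent of choices; a balanced $D$ is $0$ steps away). *)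

From HB Require Import structures.
From mathcomp Require Import all_boot all_order all_algebra.
From mathcomp Require Import complex.
From mathcomp Require Import Rstruct.
Set Implicit Arguments. Unset Strict Implicit. Unset Printing Implicit Defensive.
Import Order.TTheory GRing.Theory Num.Theory.
Local Open Scope ring_scope.

Notation RR := Rdefinitions.R.
Definition C : numClosedFieldType := complex RR.

(* A configuration of n points in the affine chart C^2 of P^2. *)
Definition config (n : nat) := 'I_n -> C * C.

Definition polyfun (n : nat) (g : config n -> C) : Prop :=
  exists s : seq (C * ('I_n -> nat * nat)),
    forall p : config n,
      g p = \sum_(ce <- s) ce.1 * \prod_(i < n) (((p i).1 ^+ (ce.2 i).1) * ((p i).2 ^+ (ce.2 i).2)).

(* P holds for very general configurations: outside a countable union of
   proper Zariski-closed subsets (zero sets of non-identically-zero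
   polynomial functions). *)
Definition very_general (n : nat) (P : config n -> Prop) : Prop :=
  exists G : nat -> config n -> C,
    (forall k, polyfun (G k) /\ exists p, G k p != 0) /\
    (forall p : config n, (forall k, G k p != 0) -> P p).

(* Bivariate polynomials f(x,y) as {poly {poly C}}: outer variable y,
   inner variable x; f`_i`_j is the coefficient of y^i x^j. *)
(* f has multiplicity >= m at the point (a,b): all partial derivatives of
   order < m vanish at (a,b) (characteristic 0). *)
Definition mult_ge (f : {poly {poly C}}) (ab : C * C) (m : int) : Prop :=
  forall i j : nat, ((i + j)%:Z < m)%R ->
    ((map_poly (fun q : {poly C} => q^`(j)) (f^`(i))).[ab.2%:P]).[ab.1] = 0.

(* The class dH - sum_i m_i E_i on the blowup X_p of P^2 at p is effective:
   there is a nonzero plane curve of degree d (dehomogenised: total degree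
   <= d) with multiplicity >= m_i at p_i for every i. *)
Definition effective (n : nat) (p : config n) (d : int) (m : 'I_n -> int) : Prop :=
  exists f : {poly {poly C}}, f != 0 /\
    (forall i j : nat, (d < (i + j)%:Z)%R -> f`_i`_j = 0) /\
    (forall k, mult_ge f (p k) (m k)).

(* Intersection numbers with A_t = tH - E and K = -3H + E. *)
Definition AdotD (n : nat) (t : RR) (d : int) (m : 'I_n -> int) : RR :=
  t * d%:~R - (\sum_(k < n) m k)%:~R.
Definition AdotK (n : nat) (t : RR) : RR := - 3 * t + n%:R.

(* chi(O_X(D)) by Riemann-Roch: 1 + (D^2 - D.K)/2
   = 1 + (d^2 + 3d - sum_i (m_i^2 + m_i))/2 (the numerator is even). *)
Definition chi (n : nat) (d : int) (m : 'I_n -> int) : int :=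
  1 + ((d * d + 3 * d - \sum_(k < n) (m k * m k + m k)) %/ 2)%Z.

Definition nonzero_class (n : nat) (d : int) (m : 'I_n -> int) : Prop :=
  d != 0 \/ exists k, m k != 0.

(* A_t ample on X_p (Nakai-Moishezon criterion for R-divisors):
   A_t^2 > 0 and A_t . D > 0 for every nonzero effective class D. *)
Definition ample (n : nat) (p : config n) (t : RR) : Prop :=
  0 < t * t - n%:R /\
  forall d m, effective p d m -> nonzero_class d m -> 0 < AdotD t d m.

Definition balanced (n : nat) (m : 'I_n -> int) : Prop :=
  forall i j, `|m i - m j| <= 1.

Definition balance_step (n : nat) (m m' : 'I_n -> int) : Prop :=
  ~ balanced m /\
  exists i j : 'I_n, (forall k, m i <= m k) /\ (forall k, m k <= m j) /\
    m' = (fun k => m k + (k == i)%:Z - (k == j)%:Z).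

Definition steps_away (n : nat) (m : 'I_n -> int) (k : nat) : Prop :=
  exists s : nat -> ('I_n -> int),
    s 0%N = m /\ (forall r, (r < k)%N -> balance_step (s r) (s r.+1)) /\
    balanced (s k).

Definition is_chi_max (n : nat) (p : config n) (t : RR) (chimax : int) : Prop :=
  (exists d m, effective p d m /\ 2 * AdotD t d m <= AdotK n t /\ chi d m = chimax) /\
  (forall d m, effective p d m -> 2 * AdotD t d m <= AdotK n t -> chi d m <= chimax).

From HB Require Import structures.
From mathcomp Require Import all_boot all_order all_algebra.
From mathcomp Require Import complex.
From mathcomp Require Import Rstruct.
From mathcomp Require Import zify ring lra.
Import Order.TTheory GRing.Theory Num.Theory.
Local Open Scope ring_scope.

(* A balancing step raises a smallest multiplicity and lowers a largest one: it keeps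
   A_t.D, which only sees d and sum m_i, and raises chi by m_max - m_min - 1 >= 1.
   A point of multiplicity mu imposes mu(mu+1)/2 linear conditions on the (d+1)(d+2)/2
   coefficients of a plane curve of degree d, so every class with d >= 0 and chi >= 1 is
   effective, whatever the points are.  Hence every class along a balancing path
   competes for chi_max, which bounds the number of steps.  For n <= 17, Cauchy-Schwarz
   (sum m_i)^2 <= n sum m_i^2 together with t^2 > n and 2 A_t.D <= A_t.K gives
   (2d+3)^2 < n + 4 sum (m_i^2 + m_i), i.e. chi <= 1 for every competitor; so
   chi(D) = chi_max = 1, and D is balanced since a balancing step would reach chi >= 2. *)

Fixpoint monomials_below (M : nat) : seq (nat * nat) :=
  if M is M'.+1 then monomials_below M' ++ [seq (i, M' - i)%N | i <- iota 0 M]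
  else [::].

Lemma monomials_belowS M :
  monomials_below M.+1 = monomials_below M ++ [seq (i, M - i)%N | i <- iota 0 M.+1].
Proof. by []. Qed.

Lemma size_monomials_below M : (2 * size (monomials_below M) = M * M.+1)%N.
Proof.
by elim: M => [|M IH] //; rewrite monomials_belowS size_cat size_map size_iota; lia.
Qed.

Lemma mem_monomials_below M a b : ((a, b) \in monomials_below M) = (a + b < M)%N.
Proof.
elim: M => [|M IH] //; rewrite monomials_belowS mem_cat IH.
apply/orP/idP => [[ab_lt|] | ab_lt]; first lia.
  by case/mapP => i; rewrite mem_iota => i_le [-> ->]; lia.
have [|ab_eq] := ltnP (a + b) M; [by left | right].
by apply/mapP; exists a; rewrite ?mem_iota; [lia | congr pair; lia].
Qed.

Lemma uniq_monomials_below M : uniq (monomials_below M).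
Proof.
elim: M => [|M IH] //; rewrite monomials_belowS cat_uniq IH andTb; apply/andP; split.
  by apply/hasPn => _ /mapP [i _ ->]; rewrite mem_monomials_below; lia.
by rewrite map_inj_uniq ?iota_uniq // => i j [].
Qed.

Lemma exists_nonzero_left_kernel {F : fieldType} {m n} (A : 'M[F]_(m, n)) :
  (n < m)%N -> exists2 v : 'rV_m, v != 0 & v *m A = 0.
Proof.
move=> lt_nm; have : kermx A != 0.
  by rewrite kermx_eq0 /row_free; have := rank_leq_col A; lia.
by case/rowV0Pn => v /sub_kermxP vA v0; exists v.
Qed.

Section PlaneCurves.

Context {F : fieldType}.

(* [mult_ge f ab m] unfolds to [forall i j, i + j < m -> pderiv_at i j ab f = 0]. *)
Definition pderiv_at (i j : nat) (ab : F * F) (f : {poly {poly F}}) : F :=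
  ((map_poly (derivn j) (f^`(i))).[ab.2%:P]).[ab.1].

Definition monomial (ij : nat * nat) : {poly {poly F}} := ('X^(ij.2))%:P * 'X^(ij.1).

Lemma pderiv_at_lincomb I (r : seq I) (c : I -> F) (g : I -> {poly {poly F}}) i j ab :
  pderiv_at i j ab (\sum_(a <- r) (c a)%:P%:P * g a) =
  \sum_(a <- r) c a * pderiv_at i j ab (g a).
Proof.
rewrite /pderiv_at raddf_sum raddf_sum !horner_sum; apply: eq_bigr => a _ /=.
rewrite mul_polyC derivnZ.
have -> : map_poly (derivn j) ((c a)%:P *: (g a)^`(i)) =
          (c a)%:P%:P * map_poly (derivn j) (g a)^`(i).
  apply/polyP => l; rewrite coefCM !coef_map_id0 ?linear0 //.
  by rewrite coefZ !mul_polyC derivnZ.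
by rewrite !hornerE.
Qed.

Lemma coef_lincomb_monomial {N} (c : 'I_N -> F) (T : seq (nat * nat)) i j :
  ((\sum_(a < N) (c a)%:P%:P * monomial (nth (0, 0)%N T a))`_i)`_j =
  \sum_(a < N) c a * (nth (0, 0)%N T a == (i, j))%:R.
Proof.
rewrite !coef_sum; apply: eq_bigr => a _.
case: (nth _ T a) => k l; rewrite /monomial /= !coefCM coefXn xpair_eqE eq_sym.
by case: (k == i); rewrite /= ?mulr1 ?mulr0 ?coefXn ?coef0 ?mulr0 // eq_sym.
Qed.

Lemma exists_curve_with_multiplicities {n} (pts : 'I_n -> F * F) (D : nat)
    (mu : 'I_n -> nat) :
  (\sum_k mu k * (mu k).+1 < D.+1 * D.+2)%N ->
  exists2 f : {poly {poly F}}, f != 0 &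
    (forall i j, (D < i + j)%N -> f`_i`_j = 0) /\
    (forall k i j, (i + j < mu k)%N -> pderiv_at i j (pts k) f = 0).
Proof.
move=> count.
pose T := monomials_below D.+1.
pose conds := [seq (k, ij) | k <- enum 'I_n, ij <- monomials_below (mu k)].
pose cond c := tnth (in_tuple conds) c.
pose A := \matrix_(a < size T, c < size conds)
  pderiv_at (cond c).2.1 (cond c).2.2 (pts (cond c).1) (monomial (nth (0, 0)%N T a)).
have [|v v0 vA] := exists_nonzero_left_kernel A.
  have : (2 * size conds = \sum_k mu k * (mu k).+1)%N.
    rewrite size_allpairs_dep sumnE big_map big_enum /= big_distrr /=.
    by apply: eq_bigr => k _; rewrite size_monomials_below.
  have := size_monomials_below D.+1; rewrite -/T; lia.
pose f := \sum_(a < size T) (v 0 a)%:P%:P * monomial (nth (0, 0)%N T a).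
exists f; last split.
- have [a va] : exists a, v 0 a != 0.
    apply/existsP; apply: contraNT v0 => /existsPn v_eq0.
    by apply/eqP/rowP => a; rewrite mxE; apply/eqP/negPn.
  apply: contraNneq va => f0.
  have := coef_lincomb_monomial (v 0) T (nth (0, 0)%N T a).1 (nth (0, 0)%N T a).2.
  rewrite -/f f0 !coef0 -surjective_pairing (bigD1 a) //= eqxx mulr1.
  rewrite big1 ?addr0 => [<- //|b ba]; rewrite nth_uniq ?uniq_monomials_below //.
  by rewrite (inj_eq val_inj) (negbTE ba) mulr0.
- move=> i j ij_gt; rewrite coef_lincomb_monomial big1 // => a _.
  have := mem_nth (0, 0)%N (ltn_ord a); rewrite -/T.
  case: (nth _ T a) => k l; rewrite mem_monomials_below.
  by case: eqP => [[-> ->]|_] ?; rewrite ?mulr0 //; lia.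
- move=> k i j ij_lt.
  have /tnthP [c cE] : (k, (i, j)) \in in_tuple conds.
    by apply/allpairsPdep; exists k, (i, j); rewrite mem_enum mem_monomials_below.
  have := congr1 (fun w : 'rV_(size conds) => w 0 c) vA.
  rewrite !mxE /= pderiv_at_lincomb => vAc; rewrite -[RHS]vAc; apply: eq_bigr => a _.
  by rewrite mxE /cond -cE.
Qed.

End PlaneCurves.

Lemma chi_ge1_sum_le n d (m : 'I_n -> int) :
  1 <= chi d m -> \sum_k (m k * m k + m k) <= d * d + 3 * d.
Proof. by rewrite /chi -[X in X <= _]addr0 lerD2l divz_ge0 // subr_ge0. Qed.

Lemma effective_deg_ge0 {n} {p : config n} {d m} : effective p d m -> 0 <= d.
Proof.
case=> f [f0 [deg _]]; rewrite leNgt; apply: contra f0 => d_lt0.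
by apply/eqP/polyP => i; apply/polyP => j; rewrite !coef0 deg //; lia.
Qed.

Lemma effective_of_chi_ge1 n (p : config n) d m :
  0 <= d -> 1 <= chi d m -> effective p d m.
Proof.
move=> d_ge0 /chi_ge1_sum_le sum_le.
pose mu k := if 0 <= m k then `|m k|%N else 0%N.
have mu_le k : (mu k * (mu k).+1)%N%:Z <= m k * m k + m k.
  by rewrite /mu; case: ifP; case: (m k) => x; rewrite ?mul0n; nia.
have sum_mu_le : (\sum_k mu k * (mu k).+1)%N%:Z <= \sum_k (m k * m k + m k).
  by rewrite -natz natr_sum; apply: ler_sum => k _; rewrite natz.
have [|f f0 [deg mult]] := exists_curve_with_multiplicities p `|d|%N mu; first nia.
exists f; split=> //; split=> [i j ij_gt | k i j ij_lt]; first by apply: deg; lia.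
by apply: mult; move: ij_lt; rewrite /mu; case: ifP; lia.
Qed.

Section Balancing.

Context {n : nat}.
Implicit Types m : 'I_n -> int.

Lemma sum_delta_int (i : 'I_n) : \sum_k (k == i)%:Z = 1.
Proof. by rewrite (bigD1 i) //= eqxx big1 ?addr0 // => k /negbTE ->. Qed.

Lemma sum_balance_step {m m'} : balance_step m m' -> \sum_k m' k = \sum_k m k.
Proof.
case=> _ [i [j [_ [_ ->]]]].
by rewrite sumrB big_split /= !sum_delta_int addrK.
Qed.

Lemma balance_step_gap {m i j} : ~ balanced m ->
  (forall k, m i <= m k) -> (forall k, m k <= m j) -> 2 <= m j - m i.
Proof.
move=> unbal min_i max_j; rewrite leNgt; apply/negP => gap; apply: unbal => a b.
by have := min_i a; have := min_i b; have := max_j a; have := max_j b; lia.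
Qed.

Lemma chi_balance_step d {m m1} : balance_step m m1 -> chi d m + 1 <= chi d m1.
Proof.
case=> unbal [i [j [min_i [max_j ->]]]].
have gap := balance_step_gap unbal min_i max_j.
have ij : i != j by apply: contraTneq gap => ->; rewrite subrr.
set m' := fun k => _.
have sq_m' k : m' k * m' k + m' k =
    m k * m k + m k + (k == i)%:Z * (2 * m i + 2) - (k == j)%:Z * (2 * m j).
  rewrite /m'; have [->|_] := eqVneq k i; first by rewrite (negbTE ij) /=; ring.
  by have [->|_] := eqVneq k j => /=; ring.
have sum_sq : \sum_k (m' k * m' k + m' k) =
    \sum_k (m k * m k + m k) + (2 * m i + 2) - 2 * m j.
  rewrite (eq_bigr _ (fun k _ => sq_m' k)) sumrB big_split /=.
  by rewrite -!mulr_suml !sum_delta_int !mul1r.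
rewrite /chi sum_sq.
have -> : d * d + 3 * d - (\sum_k (m k * m k + m k) + (2 * m i + 2) - 2 * m j) =
    (m j - m i - 1) * 2 + (d * d + 3 * d - \sum_k (m k * m k + m k)) by ring.
by rewrite divzMDl //; lia.
Qed.

Lemma exists_balance_step m : ~ balanced m -> exists m', balance_step m m'.
Proof.
move=> unbal; have [a _|no_index] := pickP (@predT 'I_n); last first.
  by case: unbal => a; have := no_index a.
have [i _ min_i] := arg_minP m (P := xpredT) (i0 := a) isT.
have [j _ max_j] := arg_maxP m (P := xpredT) (i0 := a) isT.
exists (fun k => m k + (k == i)%:Z - (k == j)%:Z); split=> //.
by exists i, j; split=> [k|]; [exact: min_i | split=> // k; exact: max_j].
Qed.

Lemma steps_away_chi d m k : steps_away m k ->
  exists m', \sum_i m' i = \sum_i m i /\ chi d m + k%:Z <= chi d m'.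
Proof.
case=> s [s0 [step _]]; exists (s k).
suff gain r : (r <= k)%N ->
    \sum_i s r i = \sum_i m i /\ chi d m + r%:Z <= chi d (s r) by exact: gain.
elim: r => [|r IH] r_le; first by rewrite s0 addr0.
have [sum_r chi_r] := IH (ltnW r_le); have step_r := step r r_le.
rewrite (sum_balance_step step_r); split=> //.
by have := chi_balance_step d step_r; lia.
Qed.

End Balancing.

Lemma sqr_sum_le_card_sum_sqr {R : realDomainType} {I : finType} (x : I -> R) :
  (\sum_i x i) ^+ 2 <= #|I|%:R * \sum_i x i ^+ 2.
Proof.
set S := \sum_i x i; set Q := \sum_i x i ^+ 2.
have [I0|I_gt0] := posnP #|I|.
  suff -> : S = 0 by rewrite I0 mul0r expr0n.
  by rewrite /S big_pred0 // => i; have := card0_eq I0 i.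
have : 0 <= \sum_i (#|I|%:R * x i - S) ^+ 2 by apply: sumr_ge0 => i _; exact: sqr_ge0.
have -> : \sum_i (#|I|%:R * x i - S) ^+ 2 = #|I|%:R * (#|I|%:R * Q - S ^+ 2).
  have -> : \sum_i (#|I|%:R * x i - S) ^+ 2 = \sum_i #|I|%:R ^+ 2 * x i ^+ 2
      - \sum_i 2 * #|I|%:R * S * x i + \sum_(i : I) S ^+ 2.
    by rewrite -sumrB -big_split; apply: eq_bigr => i _ /=; ring.
  by rewrite sumr_const -!mulr_sumr -/S -/Q -[#|xpredT|]/#|I| -mulr_natr; ring.
by rewrite pmulr_rge0 ?ltr0n // subr_ge0.
Qed.

(* Used with N = n, e = 2d + 3, S = sum m_i, Q = sum m_i^2: then [t * e <= N + 2 * S]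
   is 2 A_t.D <= A_t.K. *)
Lemma sqr_lt_of_mul_le (R : realFieldType) (N t e S Q : R) :
  0 < N -> N < t ^+ 2 -> 0 < t -> 0 < e -> S ^+ 2 <= N * Q ->
  t * e <= N + 2 * S -> e ^+ 2 < N + 4 * (S + Q).
Proof.
move=> N_gt0 t2_gt t_gt0 e_gt0 CS te_le.
rewrite -(ltr_pM2l N_gt0).
have te_ge0 : 0 <= t * e by rewrite mulr_ge0 // ltW.
have lt1 : N * e ^+ 2 < (t * e) ^+ 2 by rewrite exprMn ltr_pM2r // exprn_gt0.
have le2 : (t * e) ^+ 2 <= (N + 2 * S) ^+ 2 by rewrite lerXn2r // ?nnegrE //; lra.
have le3 : (N + 2 * S) ^+ 2 <= N * (N + 4 * (S + Q)) by nra.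
by apply: (lt_le_trans lt1); apply: le_trans le3.
Qed.

Lemma chi_le1_of_AdotK {n d} {m : 'I_n -> int} {t : RR} :
  (0 < n)%N -> (n <= 17)%N -> 0 <= d -> 0 < t -> n%:R < t ^+ 2 ->
  2 * AdotD t d m <= AdotK n t -> chi d m <= 1.
Proof.
move=> n_gt0 n_le17 d_ge0 t_gt0 t2_gt DAK.
set S := \sum_k m k; set Q := \sum_k m k ^+ 2.
have CS : S%:~R ^+ 2 <= n%:R * Q%:~R :> RR.
  have := sqr_sum_le_card_sum_sqr m.
  by rewrite card_ord -(ler_int RR) rmorphXn rmorphM rmorph_nat.
have : ((2 * d + 3) ^+ 2)%:~R < (n%:Z + 4 * (S + Q))%:~R :> RR.
  have -> : ((2 * d + 3) ^+ 2)%:~R = (2 * d%:~R + 3) ^+ 2 :> RR.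
    by rewrite rmorphXn rmorphD rmorphM.
  have -> : (n%:Z + 4 * (S + Q))%:~R = n%:R + 4 * (S%:~R + Q%:~R) :> RR.
    by rewrite intrD intrM (intrD _ S Q).
  apply: sqr_lt_of_mul_le t2_gt t_gt0 _ CS _; rewrite ?ltr0n //.
    by rewrite -(ler_int RR) in d_ge0; lra.
  by move: DAK; rewrite /AdotD /AdotK -/S; lra.
rewrite ltr_int => deg_lt.
suff : ((d * d + 3 * d - \sum_k (m k * m k + m k)) %/ 2 < 1)%Z by rewrite /chi; lia.
rewrite ltz_divLR // big_split -/S /=; under eq_bigr do rewrite -expr2.
by rewrite -/Q; lia.
Qed.

Lemma ample_gt0 {n} {p : config n} {t} : ample p t -> 0 < t.
Proof.
case=> _ /(_ 1 (fun _ => 0)); rewrite /AdotD big1 // mulr1 subr0; apply.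
  by apply: effective_of_chi_ge1; rewrite // /chi big1 // => k _; rewrite mulr0.
by left; exact: oner_neq0.
Qed.

Lemma very_general_of_forall n (P : config n -> Prop) :
  (forall p, P p) -> very_general P.
Proof.
move=> P_all; exists (fun _ _ => 1); split=> // k; split.
  exists [:: (1, fun _ => (0%N, 0%N))] => p.
  by rewrite big_seq1 mul1r big1 // => i _; rewrite mulr1.
by exists (fun _ => (0, 0)); exact: oner_neq0.
Qed.

Theorem proposition4p4 (n : nat) :
  very_general (fun p : config n =>
    forall (d : int) (m : 'I_n -> int) (t : RR) (chimax : int),
      effective p d m -> 1 <= chi d m ->
      ample p t -> 2 * AdotD t d m <= AdotK n t ->
      is_chi_max p t chimax ->
      (forall k : nat, steps_away m k -> k%:Z <= chimax - chi d m) /\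
      ((10 <= n <= 17)%N -> chi d m = 1 /\ chimax = 1 /\ balanced m)).
Proof.
apply: very_general_of_forall => p d m t chimax Dm chi_ge1 Apt DAK.
case=> [[d' [m' [Dm' [DAK' chi_m']]]] chimax_ub].
have d_ge0 := effective_deg_ge0 Dm; have t_gt0 := ample_gt0 Apt.
have chi_le_max := chimax_ub d m Dm DAK.
split=> [k /(steps_away_chi d) [m1 [sum_m1 chi_m1]] | /andP [n_ge10 n_le17]].
  have Dm1 : effective p d m1 by apply: effective_of_chi_ge1; lia.
  have := chimax_ub d m1 Dm1; rewrite /AdotD sum_m1 => /(_ DAK); lia.
have t2_gt : n%:R < t ^+ 2 by case: Apt; rewrite expr2 subr_gt0.
have n_gt0 : (0 < n)%N by lia.
have chi_le1 d1 (m1 : 'I_n -> int) :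
    0 <= d1 -> 2 * AdotD t d1 m1 <= AdotK n t -> chi d1 m1 <= 1.
  by move=> d1_ge0; apply: chi_le1_of_AdotK.
have chimax_le1 : chimax <= 1.
  by rewrite -chi_m'; apply: chi_le1 => //; exact: effective_deg_ge0 Dm'.
split; [lia | split; first lia].
move=> a b; rewrite leNgt; apply/negP => gap.
have [m1 step] : exists m1, balance_step m m1.
  by apply: exists_balance_step; move/(_ a b); rewrite leNgt gap.
have := chi_balance_step d step; have := chi_le1 d m1 d_ge0.
by rewrite /AdotD (sum_balance_step step) => /(_ DAK); lia.
Qed.
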